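(* Let $\mathcal K$ be a tame topological Kuranishi atlas. Then for all $I\subset J$ in $\mathcal I_{\mathcal K}$, $$\mathrm{im}\,\phi_{IJ}=\mathfrak s_J^{-1}(\mathbb E_{IJ})\subset U_J,\qquad \mathrm{im}\,\widehat\Phi_{IJ}=\mathbb E_{IJ}\cap(\mathfrak s_J\circ\mathrm{pr}_J)^{-1}(\mathbb E_{IJ})\subset\mathbb E_J,$$ and these are closed subsets of $U_J$ resp. $\mathbb E_J$. Moreover, for $J\in\mathcal I_{\mathcal K}$ and $H,I\subset J$ with $H\cap I\neq\emptyset$ we have $\mathrm{im}\,\phi_{HJ}\cap\mathrm{im}\,\phi_{IJ}=\mathrm{im}\,\phi_{(H\cap I)J}$, while if $H\cap I=\emptyset$ then $\mathrm{im}\,\phi_{HJ}\cap\mathrm{im}\,\phi_{IJ}=\mathfrak s_J^{-1}(0_J)$.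
   Context: $X$ is a compact metrizable space. Charts: a topological Kuranishi chart for $X$ with open footprint $F\subset X$ is a tuple $\mathbf K=(U,\mathbb E,\mathfrak s,\psi)$ where $U$ is a separable, locally compact, metrizable space; $\mathbb E$ is a separable, locally compact, metrizable space with continuous maps $\mathrm{pr}:\mathbb E\to U$ and $0:U\to\mathbb E$ with $\mathrm{pr}\circ0=\mathrm{id}_U$; $\mathfrak s:U\to\mathbb E$ is continuous with $\mathrm{pr}\circ\mathfrak s=\mathrm{id}_U$; and $\psi$ is a homeomorphism from $\mathfrak s^{-1}(0):=\{x\in U:\mathfrak s(x)=0(x)\}$ onto $F$. Coordinate changes: for charts $\mathbf K_I,\mathbf K_J$ with $F_I\cap F_J\neq\emptyset$, a coordinate change $\widehat\Phi_{IJ}:\mathbf K_I\to\mathbf K_J$ consists of an open set $U_{IJ}\subset U_I$ with $U_{IJ}\cap\mathfrak s_I^{-1}(0_I)=\psi_I^{-1}(F_I\cap F_J)$ and a topological embedding $\widehat\Phi_{IJ}:\mathrm{pr}_I^{-1}(U_{IJ})\to\mathbb E_J$ such that there is a topological embedding $\phi_{IJ}:U_{IJ}\to U_J$ with $\mathrm{pr}_J\circ\widehat\Phi_{IJ}=\phi_{IJ}\circ\mathrm{pr}_I$, $0_J\circ\phi_{IJ}=\widehat\Phi_{IJ}\circ0_I$ and $\mathfrak s_J\circ\phi_{IJ}=\widehat\Phi_{IJ}\circ\mathfrak s_I$ on $U_{IJ}$, and $\phi_{IJ}=\psi_J^{-1}\circ\psi_I$ on $U_{IJ}\cap\mathfrak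 s_I^{-1}(0_I)$. Atlases: a covering family of basic charts is a finite family $(\mathbf K_i)_{i=1,\dots,N}$ of charts whose footprints cover $X$; $\mathcal I_{\mathcal K}$ is the set of nonempty $I\subset\{1,\dots,N\}$ with $F_I:=\bigcap_{i\in I}F_i\neq\emptyset$. Transition data consist of a chart $\mathbf K_J$ with footprint $F_J$ for each $J\in\mathcal I_{\mathcal K}$ with $|J|\ge2$ (and $\mathbf K_{\{i\}}:=\mathbf K_i$), and a coordinate change $\widehat\Phi_{IJ}:\mathbf K_I\to\mathbf K_J$ for all $I\subsetneq J$ in $\mathcal I_{\mathcal K}$. We set $U_{II}:=U_I$, $\phi_{II}:=\mathrm{id}_{U_I}$, $\widehat\Phi_{II}:=\mathrm{id}_{\mathbb E_I}$. For $I\subsetneq J\subsetneq K$ let $U_{IJK}:=U_{IJ}\cap\phi_{IJ}^{-1}(U_{JK})$. The triple satisfies the weak cocycle condition if $\widehat\Phi_{JK}\circ\widehat\Phi_{IJ}=\widehat\Phi_{IK}$ on $\mathrm{pr}_I^{-1}(U_{IJK}\cap U_{IK})$; the cocycle condition if in addition $U_{IJK}\subset U_{IK}$; the strong cocycle condition if in addition $U_{IJK}=U_{IK}$. A weak topological Kuranishi atlas $\mathcal K$ is a covering family with transition data satisfying the weak cocycle condition for all such triples; a topological Kuranishi atlas is one satisfying the cocycle condition for all triples. Filtrations: a weak topological Kuranishi atlas is filtered if it is equipped with closed subsets $\mathbb E_{IJ}\subset\mathbb E_J$ for all $J\in\mathcal I_{\mathcal K}$ and $I\subset J$ (including $I=\emptyset$)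 such that (i) $\mathbb E_{JJ}=\mathbb E_J$ and $\mathbb E_{\emptyset J}=\mathrm{im}\,0_J$; (ii) $\widehat\Phi_{JK}(\mathrm{pr}_J^{-1}(U_{JK})\cap\mathbb E_{IJ})=\mathbb E_{IK}\cap\mathrm{pr}_K^{-1}(\mathrm{im}\,\phi_{JK})$ for $I\subset J\subsetneq K$; (iii) $\mathbb E_{IJ}\cap\mathbb E_{HJ}=\mathbb E_{(I\cap H)J}$ for $I,H\subset J$; (iv) $\mathrm{im}\,\phi_{IJ}$ is an open subset of $\mathfrak s_J^{-1}(\mathbb E_{IJ})$ for $I\subsetneq J$. Tameness: a filtered weak topological Kuranishi atlas is tame if $U_{IJ}\cap U_{IK}=U_{I(J\cup K)}$ for all $I,J,K\in\mathcal I_{\mathcal K}$ with $I\subset J,K$ (where $U_{IL}:=\emptyset$ if $L\notin\mathcal I_{\mathcal K}$), and $\phi_{IJ}(U_{IK})=U_{JK}\cap\mathfrak s_J^{-1}(\mathbb E_{IJ})$ for all $I\subset J\subset K$ in $\mathcal I_{\mathcal K}$ (equalities of indices allowed). *)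

From Stdlib Require Import Reals.
From mathcomp Require Import all_boot.
From Stdlib Require List.


Definition is_topology (T : Type) (op : (T -> Prop) -> Prop) : Prop :=
  op (fun _ => True) /\ op (fun _ => False) /\
  (forall A B, op A -> op B -> op (fun x => A x /\ B x)) /\
  (forall (I : Type) (F : I -> T -> Prop),
      (forall i, op (F i)) -> op (fun x => exists i, F i x)).

Record space := Space {
  pt :> Type;
  opens : (pt -> Prop) -> Prop;
  opens_topology : is_topology pt opens }.

Definition opn {X : space} (A : X -> Prop) : Prop := opens X A.
Definition is_closed {X : space} (A : X -> Prop) : Prop := opn (fun x => ~ A x).

Definition rel_open_in {X : space} (A B : X -> Prop) : Prop :=
  (forall x, A x -> B x) /\
  exists V, opn V /\ forall x, A x <-> (V x /\ B x).

Definition continuous_on {X Y : space} (D : X -> Prop) (f : X -> Y) : Prop :=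
  forall V, opn V -> exists W, opn W /\ forall x, D x -> (V (f x) <-> W x).

Definition continuous {X Y : space} (f : X -> Y) : Prop :=
  continuous_on (fun _ => True) f.

Definition embedding_on {X Y : space} (D : X -> Prop) (f : X -> Y) : Prop :=
  (forall x y, D x -> D y -> f x = f y -> x = y) /\
  continuous_on D f /\
  (forall W, opn W -> exists V, opn V /\ forall x, D x -> (W x <-> V (f x))).

Definition homeo_onto {X Y : space} (D : X -> Prop) (f : X -> Y) (F : Y -> Prop)
  : Prop :=
  embedding_on D f /\ forall y, F y <-> exists x, D x /\ f x = y.

Definition compact_set {X : space} (K : X -> Prop) : Prop :=
  forall (I : Type) (V : I -> X -> Prop),
    (forall i, opn (V i)) -> (forall x, K x -> exists i, V i x) ->
    exists l : list I, forall x, K x -> exists i, List.In i l /\ V i x.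

Definition compact (X : space) : Prop := compact_set (fun _ : X => True).

Definition locally_compact (X : space) : Prop :=
  forall x : X, exists (K V : X -> Prop),
    compact_set K /\ opn V /\ V x /\ forall y, V y -> K y.

Definition separable (X : space) : Prop :=
  exists D : X -> Prop,
    (exists e : nat -> option X, forall x, D x -> exists n, e n = Some x) /\
    forall V, opn V -> (exists x, V x) -> exists x, V x /\ D x.

Definition is_metric {T : Type} (d : T -> T -> R) : Prop :=
  (forall x y, d x y = R0 <-> x = y) /\
  (forall x y, d x y = d y x) /\
  (forall x y z, Rle (d x z) (Rplus (d x y) (d y z))).

Definition metrizable (X : space) : Prop :=
  exists d : X -> X -> R, is_metric d /\
    forall V : X -> Prop, opn V <->
      (forall x, V x -> exists eps, Rlt R0 eps /\
                   forall y, Rlt (d x y) eps -> V y).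


Record chart (X : space) := Chart {
  cU : space;
  cE : space;
  cpr : cE -> cU;
  czero : cU -> cE;
  cs : cU -> cE;
  cpsi : cU -> X;
  cF : X -> Prop }.

Arguments cU {X} c.
Arguments cE {X} c.
Arguments cpr {X} c _.
Arguments czero {X} c _.
Arguments cs {X} c _.
Arguments cpsi {X} c _.
Arguments cF {X} c _.

Definition zset {X : space} (c : chart X) (x : cU c) : Prop :=
  cs c x = czero c x.

Definition is_chart {X : space} (c : chart X) : Prop :=
  [/\ separable (cU c), locally_compact (cU c), metrizable (cU c),
      separable (cE c) &
  [/\ locally_compact (cE c), metrizable (cE c),
      continuous (cpr c), continuous (czero c) &
  [/\ (forall x, cpr c (czero c x) = x),
      continuous (cs c), (forall x, cpr c (cs c x) = x),
      opn (cF c) & homeo_onto (zset c) (cpsi c) (cF c)]]].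

(* Atlas data: charts K_I indexed by subsets I of {1..N} (as 'I_N),     *)
(* basic charts K_i := K_{{i}}, domains U_IJ, maps phi_IJ, Phi_IJ, and  *)
(* filtration E_IJ.  Functions defined on subsets are represented by    *)
(* total functions; only their restriction to the domain matters.       *)

Record atlas_data (X : space) (N : nat) := AtlasData {
  aK : {set 'I_N} -> chart X;
  aU : forall I J : {set 'I_N}, cU (aK I) -> Prop;
  aphi : forall I J : {set 'I_N}, cU (aK I) -> cU (aK J);
  aPhi : forall I J : {set 'I_N}, cE (aK I) -> cE (aK J);
  aEE : forall I J : {set 'I_N}, cE (aK J) -> Prop }.

Arguments aK {X N} a _.
Arguments aU {X N} a I J _.
Arguments aphi {X N} a I J _.
Arguments aPhi {X N} a I J _.
Arguments aEE {X N} a I J _.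

Section AtlasDefs.
Context {X : space} {N : nat} (A : atlas_data X N).

Local Notation K := (aK A).
Local Notation U := (aU A).
Local Notation phi := (aphi A).
Local Notation Phi := (aPhi A).
Local Notation EE := (aEE A).

Definition Fint (I : {set 'I_N}) (x : X) : Prop :=
  forall i, i \in I -> cF (K [set i]) x.

Definition inIK (I : {set 'I_N}) : Prop := I != set0 /\ exists x, Fint I x.

Definition imphi (I J : {set 'I_N}) (y : cU (K J)) : Prop :=
  exists x, U I J x /\ phi I J x = y.

Definition imPhi (I J : {set 'I_N}) (e : cE (K J)) : Prop :=
  exists e', U I J (cpr (K I) e') /\ Phi I J e' = e.

Definition coord_change (I J : {set 'I_N}) : Prop :=
  [/\ opn (U I J),
      (forall x, (U I J x /\ zset (K I) x) <->
                 (zset (K I) x /\ cF (K I) (cpsi (K I) x) /\ cF (K J) (cpsi (K I) x))),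
      embedding_on (fun e => U I J (cpr (K I) e)) (Phi I J),
      embedding_on (U I J) (phi I J) &
  [/\ (forall e, U I J (cpr (K I) e) ->
         cpr (K J) (Phi I J e) = phi I J (cpr (K I) e)),
      (forall x, U I J x -> czero (K J) (phi I J x) = Phi I J (czero (K I) x)),
      (forall x, U I J x -> cs (K J) (phi I J x) = Phi I J (cs (K I) x)) &
      (forall x, U I J x -> zset (K I) x ->
         zset (K J) (phi I J x) /\ cpsi (K J) (phi I J x) = cpsi (K I) x)]].

Definition UIJK (I J L : {set 'I_N}) (x : cU (K I)) : Prop :=
  U I J x /\ U J L (phi I J x).

Definition weak_atlas : Prop :=
  [/\
      (forall i, is_chart (K [set i])),
      (forall x, exists i, cF (K [set i]) x),
      (forall J : {set 'I_N}, inIK J -> is_chart (K J) /\ forall x, cF (K J) x <-> Fint J x),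
      (forall I J : {set 'I_N}, inIK I -> inIK J -> I \proper J -> coord_change I J) &
  [/\
      (forall I : {set 'I_N}, inIK I ->
         [/\ forall x, U I I x, forall x, phi I I x = x & forall e, Phi I I e = e]) &
      (forall I J L : {set 'I_N}, inIK I -> inIK J -> inIK L -> I \proper J -> J \proper L ->
         forall e, UIJK I J L (cpr (K I) e) -> U I L (cpr (K I) e) ->
           Phi J L (Phi I J e) = Phi I L e)]].

Definition top_atlas : Prop :=
  weak_atlas /\
  (forall I J L : {set 'I_N}, inIK I -> inIK J -> inIK L -> I \proper J -> J \proper L ->
     forall x, UIJK I J L x -> U I L x).

Definition filtered : Prop :=
  [/\
      (forall I J : {set 'I_N}, inIK J -> I \subset J -> is_closed (EE I J)),
      (forall J : {set 'I_N}, inIK J ->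
         (forall e, EE J J e) /\
         (forall e, EE set0 J e <-> exists x, czero (K J) x = e)),
      (* (ii) *)
      (forall I J L : {set 'I_N}, inIK J -> inIK L -> I \subset J -> J \proper L ->
         forall e, (exists e', U J L (cpr (K J) e') /\ EE I J e' /\ Phi J L e' = e)
                   <-> (EE I L e /\ imphi J L (cpr (K L) e))),
      (* (iii) *)
      (forall I H J : {set 'I_N}, inIK J -> I \subset J -> H \subset J ->
         forall e, (EE I J e /\ EE H J e) <-> EE (I :&: H) J e) &
      (forall I J : {set 'I_N}, inIK I -> inIK J -> I \proper J ->
         rel_open_in (imphi I J) (fun y => EE I J (cs (K J) y)))].

Definition tame : Prop :=
  (forall I J L : {set 'I_N}, inIK I -> inIK J -> inIK L -> I \subset J -> I \subset L ->
     forall x, (U I J x /\ U I L x) <-> (inIK (J :|: L) /\ U I (J :|: L) x)) /\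
  (forall I J L : {set 'I_N}, inIK I -> inIK J -> inIK L -> I \subset J -> J \subset L ->
     forall y, (exists x, U I L x /\ phi I J x = y) <->
               (U J L y /\ EE I J (cs (K J) y))).

Definition tame_top_atlas : Prop := top_atlas /\ filtered /\ tame.

End AtlasDefs.

(** Tameness with [K = J] identifies [im phi_IJ] with [s_J^{-1}(E_IJ)], and
    filtration axiom (ii) transports this to [im Phi_IJ]; both are then
    preimages of the closed set [E_IJ] under continuous maps.  The
    intersection formulas are axiom (iii) read through this identification,
    using [E_{emptyset J} = im 0_J] when [H] and [I] are disjoint. *)
From Stdlib Require Import FunctionalExtensionality PropExtensionality Classical.
From mathcomp Require Import all_boot.

Lemma opn_ext {T : space} {V W : T -> Prop} :
  opn V -> (forall x, V x <-> W x) -> opn W.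
Proof.
move=> oV eqVW.
have -> : W = V.
  apply: functional_extensionality => x; apply: propositional_extensionality.
  by split=> /eqVW.
exact: oV.
Qed.

Lemma opnU {T : space} {V W : T -> Prop} :
  opn V -> opn W -> opn (fun x => V x \/ W x).
Proof.
move=> oV oW; have [_ [_ [_ opn_bigcup]]] := opens_topology T.
have oVW : opn (fun x => exists b : bool, (if b then V else W) x).
  by apply: opn_bigcup => -[].
apply: (opn_ext oVW) => x.
by split => [[[] ?]|[?|?]]; [left|right|exists true|exists false].
Qed.

Lemma is_closedI {T : space} {B C : T -> Prop} :
  is_closed B -> is_closed C -> is_closed (fun x => B x /\ C x).
Proof.
move=> cB cC; rewrite /is_closed; apply: (opn_ext (opnU cB cC)) => x.
by split=> [[nB [? _]|nC [_ ?]]|/not_and_or].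
Qed.

Lemma is_closed_preimage {T S : space} {f : T -> S} {B : S -> Prop} :
  continuous f -> is_closed B -> is_closed (fun x => B (f x)).
Proof.
move=> cf cB; have [W [oW eqW]] := cf _ cB; rewrite /is_closed.
by apply: (opn_ext oW) => x; rewrite (eqW x Logic.I).
Qed.

Lemma section_zero_zset (X : space) (c : chart X) (y : cU c) :
  is_chart c -> (exists x, czero c x = cs c y) <-> zset c y.
Proof.
case=> _ _ _ _ [_ _ _ _] [prK0 _ prKs _ _].
split=> [[x s_y]|zy]; last by exists y.
have x_y : x = y by rewrite -(prK0 x) s_y prKs.
by rewrite /zset -s_y x_y.
Qed.

Section FilteredTameAtlas.
Variables (X : space) (N : nat) (A : atlas_data X N).
Hypotheses (weakA : weak_atlas A) (filtA : filtered A) (tameA : tame A).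

Local Notation K := (aK A).
Local Notation EE := (aEE A).

Lemma inIK_setI {H I : {set 'I_N}} :
  inIK A H -> H :&: I != set0 -> inIK A (H :&: I).
Proof.
by move=> [_ [x Fx]] HI0; split=> //; exists x => i /setIP [/Fx].
Qed.

Lemma chart_inIK {J : {set 'I_N}} : inIK A J -> is_chart (K J).
Proof. by case: weakA => _ _ charts _ _ /charts []. Qed.

Lemma imphi_EE (I J : {set 'I_N}) (y : cU (K J)) :
  inIK A I -> inIK A J -> I \subset J ->
  imphi A I J y <-> EE I J (cs (K J) y).
Proof.
move=> IK_I IK_J sIJ; case: weakA => _ _ _ _ [/(_ J IK_J) [UJJ _ _] _].
rewrite /imphi (tameA.2 I J J IK_I IK_J IK_J sIJ (subxx J) y).
by split=> [[]|].
Qed.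

Lemma imPhi_EE (I J : {set 'I_N}) (e : cE (K J)) :
  inIK A I -> inIK A J -> I \subset J ->
  imPhi A I J e <-> EE I J e /\ EE I J (cs (K J) (cpr (K J) e)).
Proof.
move=> IK_I IK_J sIJ; case: filtA => _ filt_i filt_ii _ _.
have [EII _] := filt_i I IK_I.
have [eqIJ|neIJ] := eqVneq I J; first subst J.
  case: weakA => _ _ _ _ [/(_ I IK_I) [UII _ PhiII] _].
  by split=> _; [split; apply: EII | exists e; rewrite PhiII].
have pIJ : I \proper J by rewrite properEneq neIJ.
rewrite -imphi_EE // -(filt_ii I I J IK_I IK_J (subxx I) pIJ e).
by split=> [[e' [? ?]]|[e' [? [_ ?]]]]; exists e'.
Qed.

Lemma is_closed_imphi (I J : {set 'I_N}) :
  inIK A I -> inIK A J -> I \subset J -> is_closed (imphi A I J).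
Proof.
move=> IK_I IK_J sIJ; case: filtA => closedE _ _ _ _.
have [_ _ _ _ [_ _ _ _ [_ cont_s _ _ _]]] := chart_inIK IK_J.
apply: (opn_ext (is_closed_preimage cont_s (closedE I J IK_J sIJ))) => y.
by rewrite imphi_EE.
Qed.

Lemma is_closed_imPhi (I J : {set 'I_N}) :
  inIK A I -> inIK A J -> I \subset J -> is_closed (imPhi A I J).
Proof.
move=> IK_I IK_J sIJ; case: filtA => closedE _ _ _ _.
have [_ _ _ _ [_ _ cont_pr _ [_ cont_s _ _ _]]] := chart_inIK IK_J.
have cEIJ := closedE I J IK_J sIJ.
apply: (opn_ext (is_closedI cEIJ
  (is_closed_preimage cont_pr (is_closed_preimage cont_s cEIJ)))) => e.
by rewrite imPhi_EE.
Qed.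

Lemma imphiI (J H I : {set 'I_N}) (y : cU (K J)) :
  inIK A J -> inIK A H -> inIK A I -> H \subset J -> I \subset J ->
  H :&: I != set0 -> imphi A H J y /\ imphi A I J y <-> imphi A (H :&: I) J y.
Proof.
move=> IK_J IK_H IK_I sHJ sIJ HI0; case: filtA => _ _ _ filt_iii _.
have IK_HI : inIK A (H :&: I) := inIK_setI IK_H HI0.
have sHI_J : H :&: I \subset J := subset_trans (subsetIl H I) sHJ.
by rewrite !imphi_EE //; apply: filt_iii.
Qed.

Lemma imphiI_disjoint (J H I : {set 'I_N}) (y : cU (K J)) :
  inIK A J -> inIK A H -> inIK A I -> H \subset J -> I \subset J ->
  H :&: I = set0 -> imphi A H J y /\ imphi A I J y <-> zset (K J) y.
Proof.
move=> IK_J IK_H IK_I sHJ sIJ HI0; case: filtA => _ filt_i _ filt_iii _.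
rewrite !imphi_EE // filt_iii // HI0 (filt_i J IK_J).2.
exact: section_zero_zset (chart_inIK IK_J).
Qed.

End FilteredTameAtlas.

Theorem mainTheorem5 (X : space) (N : nat) (A : atlas_data X N) :
  compact X -> metrizable X -> tame_top_atlas A ->
  (forall I J : {set 'I_N}, inIK A I -> inIK A J -> I \subset J ->
     [/\ (forall y, imphi A I J y <-> aEE A I J (cs (aK A J) y)),
         (forall e, imPhi A I J e <->
                    (aEE A I J e /\ aEE A I J (cs (aK A J) (cpr (aK A J) e)))),
         is_closed (imphi A I J) &
         is_closed (imPhi A I J)]) /\
  (forall J H I : {set 'I_N}, inIK A J -> inIK A H -> inIK A I ->
     H \subset J -> I \subset J ->
     (H :&: I != set0 ->
        forall y, (imphi A H J y /\ imphi A I J y) <-> imphi A (H :&: I) J y) /\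
     (H :&: I = set0 ->
        forall y, (imphi A H J y /\ imphi A I J y) <-> zset (aK A J) y)).
Proof.
move=> _ _ [[weakA _] [filtA tameA]]; split.
  move=> I J IK_I IK_J sIJ; split.
  - by move=> y; apply: imphi_EE.
  - by move=> e; apply: imPhi_EE.
  - exact: is_closed_imphi.
  - exact: is_closed_imPhi.
move=> J H I IK_J IK_H IK_I sHJ sIJ; split.
  by move=> HI0 y; apply: imphiI.
by move=> HI0 y; apply: imphiI_disjoint.
Qed.
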